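(* Let $G$ be a finite group of $F$-class $c \ge 1$ with covering group $G^*$ (with respect to some finite generating tuple of $G$). If $H$ is any descendant of $G$, then $H \cong G^*/U$ for some allowable subgroup $U$ of $G^*$.
   Context: For a finite group $X$, $F(X)$ is its Fitting subgroup; the $F$-central series is $\nu_0(X)=F(X)$ and $\nu_{i+1}(X)$ is the smallest normal subgroup $N'$ of $F(X)$ with $N'\le\nu_i(X)$ such that $\nu_i(X)/N'$ is centralized by $F(X)$ and is a direct product of elementary abelian groups; the $F$-class is the least $c$ with $\nu_c(X)=1$, and the $F$-rank is $|\nu_0(X)/\nu_1(X)|$. Covering group: with $g_1,\dots,g_n$ generating $G$, $F$ free on $f_1,\dots,f_n$, $\mu:F\to G$, $f_i\mapsto g_i$, $R=\ker\mu$, $L=\mu^{-1}(F(G))$, $k$ the product of the distinct primes dividing the $F$-rank of $G$: $G^*=F/[R,L]R^k$, $M=R/[R,L]R^k$. The nucleus is $N=\nu_c(G^* )$. A subgroup $U$ of $G^*$ is allowable if $U$ is a proper subgroup of $M$, normal in $G^*$, with $M=NU$. A group $H$ is a descendant of $G$ if $H$ has $F$-class $c+1$ and $H/\nu_c(H)\cong G$. *)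

From HB Require Import structures.
From mathcomp Require Import all_boot all_fingroup all_solvable.
Set Implicit Arguments. Unset Strict Implicit. Unset Printing Implicit Defensive.
Local Open Scope group_scope.

(* A finite group that is a direct product of elementary abelian groups:
   abelian, and each Sylow (= p-primary) component is elementary abelian. *)
(* (For primes p not dividing #|Q|, 'O_p(Q) = 1 is trivially elementary
   abelian, so only p in primes #|Q| need checking.) *)
Definition dprod_elem_abelian (qT : finGroupType) (Q : {set qT}) : bool :=
  abelian Q && all (fun p => p.-abelem 'O_p(Q)) (primes #|Q|).

Definition Fcentral_step_cond (gT : finGroupType) (X V N : {group gT}) : bool :=
  [&& N <| 'F(X), N \subset V,
      'F(X) / N \subset 'C(V / N) & dprod_elem_abelian (V / N)].

(* F-central series: nu_0(X) = F(X), nu_{i+1}(X) = smallest N' satisfying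
   the condition, i.e. the intersection of all such N'. *)
Fixpoint Fseries (gT : finGroupType) (X : {group gT}) (i : nat) : {group gT} :=
  match i with
  | 0 => 'F(X)%G
  | i'.+1 =>
      (\bigcap_(N : {group gT} |
          Fcentral_step_cond X (Fseries X i') N) N)%G
  end.

Definition Fclass (gT : finGroupType) (X : {group gT}) (c : nat) : Prop :=
  Fseries X c = 1%G /\ (forall i, i < c -> Fseries X i != 1%G).

Definition Frank (gT : finGroupType) (X : {group gT}) : nat :=
  #|Fseries X 0 : Fseries X 1|.

Definition Fk (gT : finGroupType) (G : {group gT}) : nat :=
  \prod_(p <- primes (Frank G)) p.

(* Conditions on a finite group X with n-tuple x and morphism rho : X -> G
   sending x_i to g_i, mirroring the quotient F/[R,L]R^k: X is generated by x,
   the kernel M of rho satisfies [M, rho^-1(F(G))] = 1 and M^k = 1. *)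
Definition cover_cond (gT xT : finGroupType) (G : {group gT}) (n : nat)
    (g : n.-tuple gT) (X : {group xT}) (x : n.-tuple xT)
    (rho : {morphism X >-> gT}) : Prop :=
  [/\ X :=: <<[set y in x]>>,
      (forall i : 'I_n, rho (tnth x i) = tnth g i),
      [~: 'ker rho, rho @*^-1 'F(G)] = 1
    & exponent ('ker rho) %| Fk G].

(* (Gs, gs, pi) is the covering group G^* = F/[R,L]R^k of G w.r.t. the
   generating tuple g, given by the universal property of F/[R,L]R^k:
   the map f_i |-> gs_i induces G^* ~= F/[R,L]R^k with pi induced by mu. *)
Definition is_covering_group (gT sT : finGroupType) (G : {group gT}) (n : nat)
    (g : n.-tuple gT) (Gs : {group sT}) (gs : n.-tuple sT)
    (pi : {morphism Gs >-> gT}) : Prop :=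
  cover_cond G g gs pi /\
  (forall (xT : finGroupType) (X : {group xT}) (x : n.-tuple xT)
          (rho : {morphism X >-> gT}),
      cover_cond G g x rho ->
      exists phi : {morphism Gs >-> xT},
        forall i : 'I_n, phi (tnth gs i) = tnth x i).

Definition descendant (gT hT : finGroupType) (G : {group gT}) (c : nat)
    (H : {group hT}) : Prop :=
  Fclass H c.+1 /\ (H / Fseries H c) \isog G.

Definition allowable (sT gT : finGroupType) (Gs : {group sT})
    (pi : {morphism Gs >-> gT}) (c : nat) (U : {group sT}) : Prop :=
  [/\ U \proper 'ker pi, U <| Gs & 'ker pi = Fseries Gs c * U].

From HB Require Import structures.
From mathcomp Require Import all_boot all_fingroup all_solvable.
Set Implicit Arguments. Unset Strict Implicit. Unset Printing Implicit Defensive.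
Local Open Scope group_scope.

(* Let q : H -> G be the quotient map by N = nu_c(H).  Since
   N <= nu_1(H) <= Phi(F(H)) <= Phi(H), lifts of the generators of G generate
   H, q maps F(H) onto F(G) (Gaschuetz) and H has the F-rank of G.  As N is
   central in F(H) and the p-parts of its elements have order dividing p for
   primes p dividing the F-rank, the lifted generators satisfy the defining
   relations of G^*, so the universal property yields an epimorphism
   phi : G^* -> H over G.  Then ker pi = phi^-1(N), and phi maps F(G^* ) onto
   F(H), hence nu_c(G^* ) onto N; so U = ker phi is allowable and
   H ~= G^*/U. *)

Lemma mem_constt (gT : finGroupType) (G : {group gT}) x pi :
  x \in G -> x.`_pi \in G.
Proof. by move=> Gx; rewrite /constt groupX. Qed.

Lemma dprod_elem_abelianP (gT : finGroupType) (Q : {group gT}) :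
  reflect (abelian Q /\ forall y p, y \in Q -> prime p -> y.`_p ^+ p = 1)
          (dprod_elem_abelian Q).
Proof.
apply: (iffP andP) => -[cQQ eQ]; split=> //.
  move=> y p Qy p_pr; have [pQ | p'Q] := boolP (p \in primes #|Q|); last first.
    suff /constt1P -> : p^'.-elt y by rewrite expg1n.
    apply: pnat_dvd (order_dvdG Qy) _.
    by move: p'Q; rewrite p'natE // mem_primes p_pr cardG_gt0.
  have /(abelemP p_pr)[_ -> //] := allP eQ p pQ.
  rewrite -cycle_subG pcore_max ?[p.-group _]p_elt_constt //.
  by rewrite -sub_abelian_normal // cycle_subG mem_constt.
apply/allP=> p; rewrite mem_primes => /and3P[p_pr _ _].
apply/(abelemP p_pr); split=> [|z Opz]; first exact: abelianS (pcore_sub _ _) cQQ.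
rewrite -(constt_p_elt (mem_p_elt (pcore_pgroup _ _) Opz)).
exact: eQ (subsetP (pcore_sub _ _) z Opz) p_pr.
Qed.

Definition Fcentral_factor (gT : finGroupType) (F V N : {set gT}) : Prop :=
  [/\ N <| F, N \subset V, [~: V, F] \subset N &
      forall x p, x \in V -> prime p -> x.`_p ^+ p \in N].

Lemma Fcentral_step_condE (gT : finGroupType) (X V N : {group gT}) :
  V <| 'F(X) -> Fcentral_step_cond X V N <-> Fcentral_factor 'F(X) V N.
Proof.
case/andP=> sVF nVF; rewrite /Fcentral_step_cond.
have nNV (nNF : N <| 'F(X)) : V \subset 'N(N).
  exact: subset_trans sVF (normal_norm nNF).
have cosetX (nNF : N <| 'F(X)) x (p : nat) :
    x \in V -> coset N (x.`_p ^+ p) = (coset N x).`_p ^+ p.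
  by move=> Vx; rewrite morphX ?morph_constt ?mem_constt // (subsetP (nNV nNF)).
split.
  case/and4P=> nNF sNV cVN /dprod_elem_abelianP[_ eQ]; split=> //.
    by rewrite commGC -quotient_cents2 ?(nNV nNF) ?normal_norm.
  move=> x p Vx p_pr; apply: coset_idr.
    by rewrite groupX ?mem_constt // (subsetP (nNV nNF)).
  by rewrite cosetX // eQ // mem_quotient.
case=> nNF sNV cVFN eN; have cFV : 'F(X) / N \subset 'C(V / N).
  by rewrite quotient_cents2 ?(nNV nNF) ?normal_norm // commGC.
apply/and4P; split=> //; apply/dprod_elem_abelianP; split.
  exact: subset_trans (quotientS N sVF) cFV.
move=> _ p /morphimP[x _ Vx ->] p_pr.
by rewrite -cosetX // coset_id ?eN.
Qed.

Lemma Fcentral_factor_refl (gT : finGroupType) (F V : {group gT}) :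
  V <| F -> Fcentral_factor F V V.
Proof.
move=> nVF; split=> //; first by rewrite commg_subl normal_norm.
by move=> x p Vx _; rewrite groupX ?mem_constt.
Qed.

Section MorphFcentralFactor.

Variables (aT rT : finGroupType) (D : {group aT}) (f : {morphism D >-> rT}).

Lemma morphim_Fcentral_factor (F V N : {group aT}) :
  F \subset D -> V \subset D -> Fcentral_factor F V N ->
  Fcentral_factor (f @* F) (f @* V) (f @* N).
Proof.
move=> sFD sVD [nNF sNV cVFN eN]; split.
- exact: morphim_normal.
- exact: morphimS.
- by rewrite -morphimR // morphimS.
move=> _ p /morphimP[x Dx Vx ->] p_pr.
rewrite -morph_constt // -morphX ?mem_constt //.
by rewrite mem_morphim ?eN ?groupX ?mem_constt.
Qed.

Lemma morphpre_Fcentral_factor (F V : {group aT}) (M : {group rT}) :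
  F \subset D -> V <| F -> Fcentral_factor (f @* F) (f @* V) M ->
  Fcentral_factor F V (V :&: f @*^-1 M).
Proof.
move=> sFD nVF [nMF sMV cVFM eM]; have [sVF nFV] := andP nVF.
have sVD := subset_trans sVF sFD.
split.
- rewrite /normal subIset ?sVF //= normsI //.
  apply: subset_trans (morphpre_norm f M).
  by rewrite -sub_morphim_pre ?normal_norm.
- exact: subsetIl.
- have sVFV : [~: V, F] \subset V by rewrite commg_subl.
  by rewrite subsetI sVFV -sub_morphim_pre ?morphimR ?(subset_trans sVFV).
move=> x p Vx p_pr; have Dx := subsetP sVD x Vx.
rewrite inE groupX ?mem_constt //=; apply/morphpreP.
rewrite groupX ?mem_constt // morphX ?morph_constt ?mem_constt //.
by rewrite eM ?mem_morphim.
Qed.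

End MorphFcentralFactor.

Section FcentralSeries.

Variables (gT : finGroupType) (X : {group gT}).

Lemma Fseries_factor_step i :
  Fseries X i <| 'F(X) -> Fcentral_factor 'F(X) (Fseries X i) (Fseries X i.+1).
Proof.
move=> nVF; set V := Fseries X i.
have factorE N : Fcentral_step_cond X V N -> Fcentral_factor 'F(X) V N.
  by move/Fcentral_step_condE; apply.
have sV1V : Fseries X i.+1 \subset V.
  apply: bigcap_inf; apply/Fcentral_step_condE => //.
  exact: Fcentral_factor_refl.
split=> //.
- rewrite /normal (subset_trans sV1V (normal_sub nVF)) /=.
  by apply: norms_bigcap; apply/bigcapsP => N /factorE[/normal_norm].
- by apply/bigcapsP => N /factorE[].
- by move=> x p Vx p_pr; apply/bigcapP => N /factorE[_ _ _]; apply.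
Qed.

Lemma Fseries_normal_Fitting i : Fseries X i <| 'F(X).
Proof.
elim: i => [|i IHi]; first exact: normal_refl.
by case: (Fseries_factor_step IHi).
Qed.

Lemma Fseries_factor i : Fcentral_factor 'F(X) (Fseries X i) (Fseries X i.+1).
Proof. exact/Fseries_factor_step/Fseries_normal_Fitting. Qed.

Lemma Fseries_min i (N : {group gT}) :
  Fcentral_factor 'F(X) (Fseries X i) N -> Fseries X i.+1 \subset N.
Proof.
by move/(Fcentral_step_condE _ (Fseries_normal_Fitting i)); apply: bigcap_inf.
Qed.

Lemma Fseries_sub_Fitting i : Fseries X i \subset 'F(X).
Proof. exact: normal_sub (Fseries_normal_Fitting i). Qed.

Lemma Fseries_sub i : Fseries X i \subset X.
Proof. exact: subset_trans (Fseries_sub_Fitting i) (Fitting_sub X). Qed.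

Lemma Fseries_sub_leq i j : i <= j -> Fseries X j \subset Fseries X i.
Proof.
move/subnKC <-; elim: (j - i) => [|k IHk]; first by rewrite addn0.
by rewrite addnS (subset_trans _ IHk) //; case: (Fseries_factor (i + k)).
Qed.

End FcentralSeries.

Lemma morphim_Fseries (gT rT : finGroupType) (X : {group gT}) (Y : {group rT})
    (f : {morphism X >-> rT}) :
  f @* 'F(X) = 'F(Y) -> forall i, f @* Fseries X i = Fseries Y i.
Proof.
move=> fF; elim=> [|i IHi] //; have sFX := Fitting_sub X.
apply/eqP; rewrite eqEsubset; apply/andP; split.
  rewrite sub_morphim_pre ?Fseries_sub //.
  apply: subset_trans (subsetIr (Fseries X i) _); apply: Fseries_min.
  apply: morphpre_Fcentral_factor (Fseries_normal_Fitting X i) _ => //.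
  by rewrite fF IHi; apply: Fseries_factor.
apply: Fseries_min; rewrite -fF -IHi.
by apply: morphim_Fcentral_factor (Fseries_factor X i); rewrite ?Fseries_sub.
Qed.

Lemma Fseries_normal (gT : finGroupType) (X : {group gT}) i : Fseries X i <| X.
Proof.
rewrite /normal Fseries_sub; apply/normsP => x Xx.
have conjF : conjgm X x @* 'F(X) = 'F(X).
  by rewrite (injm_Fitting (injm_conj X x)) // morphim_conj setIid conjGid.
have := morphim_Fseries conjF i.
by rewrite morphim_conj (setIidPr (Fseries_sub X i)).
Qed.

Lemma abelem_dprod_elem_abelian (gT : finGroupType) p (Q : {group gT}) :
  p.-abelem Q -> dprod_elem_abelian Q.
Proof.
move=> abelQ; apply/andP; split; first exact: abelem_abelian abelQ.
apply/allP=> r; rewrite mem_primes => /and3P[r_pr _ rQ].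
have /eqnP-> : r \in (p : nat_pred) := pgroupP (abelem_pgroup abelQ) r r_pr rQ.
by rewrite pcore_pgroup_id ?(abelem_pgroup abelQ).
Qed.

Lemma nilpotent_maximal_normal (gT : finGroupType) (F M : {group gT}) :
  nilpotent F -> maximal M F -> M <| F /\ prime #|F : M|.
Proof.
move=> nilF maxM; have [ltMF maxMF] := maxgroupP maxM.
have nMF : F \subset 'N(M).
  have [<- | neqNF] := eqVneq 'N_F(M) F; first exact: subsetIr.
  have ltMN := nilpotent_proper_norm nilF ltMF.
  have eqNM : 'N_F(M) :=: M.
    by apply: maxMF; rewrite ?proper_sub // properEneq neqNF subsetIl.
  by rewrite eqNM properxx in ltMN.
have nsMF : M <| F by rewrite /normal proper_sub.
split=> //; apply: index_maxnormal_sol_prime (nilpotent_sol nilF) _.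
apply/maxgroupP; split=> [|H /andP[ltHF _]]; first by rewrite ltMF.
exact: maxMF.
Qed.

Lemma Fseries1_sub_Phi_Fitting (gT : finGroupType) (X : {group gT}) :
  Fseries X 1 \subset 'Phi('F(X)).
Proof.
apply/bigcapsP=> M /predU1P[-> | maxM]; first exact: Fseries_sub_Fitting.
have [nsMF prF_M] := nilpotent_maximal_normal (Fitting_nil X) maxM.
have abelQ : #|'F(X) : M|.-abelem ('F(X) / M).
  by rewrite prime_abelem ?card_quotient ?normal_norm.
apply/Fseries_min/Fcentral_step_condE; first exact: normal_refl.
apply/and4P; split=> //; first exact: normal_sub.
  exact: abelem_abelian abelQ.
exact: abelem_dprod_elem_abelian abelQ.
Qed.

Lemma Phi_sub_Phi_normal (gT : finGroupType) (G N : {group gT}) :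
  N <| G -> 'Phi(N) \subset 'Phi(G).
Proof.
move=> nsNG; have sNG := normal_sub nsNG; have sPhiN := Phi_sub N.
have nsPhiG : 'Phi(N) <| G := char_normal_trans (Phi_char N) nsNG.
apply/bigcapsP=> M /predU1P[-> | maxM]; first exact: subset_trans sPhiN sNG.
have [ltMG maxMG] := maxgroupP maxM; apply/idPn=> notsPhiM.
have nPhiM : M \subset 'N('Phi(N)).
  exact: subset_trans (proper_sub ltMG) (normal_norm nsPhiG).
have defG : M <*> 'Phi(N) = G.
  have [// | neqG] := eqVneq (M <*> 'Phi(N)) G.
  have ltJG : (M <*> 'Phi(N))%G \proper G.
    rewrite properEneq neqG join_subG (proper_sub ltMG).
    exact: subset_trans sPhiN sNG.
  by case/negP: notsPhiM; rewrite -(maxMG _ ltJG (joing_subl _ _)) joing_subr.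
have nPhiNM : N :&: M \subset 'N('Phi(N)).
  by rewrite (subset_trans _ (normal_norm (Phi_normal N))) ?subsetIl.
have defN : 'Phi(N) <*> (N :&: M) = N.
  rewrite (norm_joinEr nPhiNM) -(normC nPhiNM) group_modr //; apply/setIidPl.
  by rewrite -(norm_joinEl nPhiM) defG.
case/negP: notsPhiM; rewrite (subset_trans sPhiN) // -{1}(Phi_nongen defN).
by rewrite gen_subG subsetIr.
Qed.

Lemma Fseries1_sub_Phi (gT : finGroupType) (X : {group gT}) :
  Fseries X 1 \subset 'Phi(X).
Proof.
apply: subset_trans (Fseries1_sub_Phi_Fitting X) _.
exact: Phi_sub_Phi_normal (Fitting_normal X).
Qed.

Lemma Sylow_normal_mod_Phi (gT : finGroupType) (H K W S : {group gT}) p :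
  W \subset 'Phi(H) -> K <| H -> K \subset W * S -> p.-Sylow(K) S -> S <| H.
Proof.
move=> sWPhi nsKH sKWS sylS.
have sSH := subset_trans (pHall_sub sylS) (normal_sub nsKH).
have defH : 'Phi(H) <*> 'N_H(S) = H.
  apply/eqP; rewrite eqEsubset join_subG Phi_sub subsetIl /=.
  rewrite -{1}(Frattini_arg nsKH sylS) mul_subG ?joing_subr //.
  have sSN : S \subset 'N_H(S) by rewrite subsetI sSH normG.
  apply: subset_trans sKWS _; rewrite mul_subG //.
    exact: subset_trans sWPhi (joing_subl _ _).
  exact: subset_trans sSN (joing_subr _ _).
by rewrite /normal sSH -(Phi_nongen defH) genGid subsetIr.
Qed.

Section FittingPhiKernel.

Variables (aT rT : finGroupType) (H : {group aT}) (q : {morphism H >-> rT}).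
Hypothesis sKPhi : 'ker q \subset 'Phi(H).

Lemma morphpre_Fitting_sub : q @*^-1 'F(q @* H) \subset 'F(H).
Proof.
set P := (q @*^-1 'F(q @* H))%G; have sPH : P \subset H := subsetIl _ _.
have qP : q @* P = 'F(q @* H) by rewrite morphpreK ?Fitting_sub.
rewrite -(Sylow_gen P) gen_subG; apply/bigcupsP=> S /SylowP[p _ sylS].
have sSP := pHall_sub sylS; have sSH := subset_trans sSP sPH.
have qS : q @* S = 'O_p(q @* H).
  have sylqS : p.-Sylow('F(q @* H)) (q @* S) by rewrite -qP morphim_pHall.
  by rewrite -p_core_Fitting (nilpotent_Hall_pcore (Fitting_nil _) sylqS).
set K := (q @*^-1 (q @* S))%G.
have nsKH : K <| H.
  rewrite -[X in K <| X](morphimGK (normal_sub (ker_normal q)) (subxx H)).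
  rewrite morphpre_normal ?morphimS //.
  by move: (pcore_normal p (q @* H)); rewrite -qS.
have sylSK : p.-Sylow(K) S.
  apply: pHall_subl sylS; first by rewrite -sub_morphim_pre.
  by apply: morphpreS; rewrite (subset_trans (morphimS q sSP)) ?qP.
have nsSH : S <| H.
  by apply: Sylow_normal_mod_Phi sKPhi nsKH _ sylSK; rewrite /K /= morphimK.
rewrite (subset_trans (pcore_max (pHall_pgroup sylS) nsSH)) //.
by rewrite -p_core_Fitting pcore_sub.
Qed.

Lemma morphim_Fitting_Phi_ker : q @* 'F(H) = 'F(q @* H).
Proof.
apply/eqP; rewrite eqEsubset morphim_Fitting /=.
by rewrite -{1}(morphpreK (Fitting_sub (q @* H))) morphimS ?morphpre_Fitting_sub.
Qed.

End FittingPhiKernel.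

Lemma nilpotent_morphpre_central (aT rT : finGroupType) (D : {group aT})
    (f : {morphism D >-> rT}) (A : {group rT}) :
  nilpotent A -> [~: 'ker f, f @*^-1 A] = 1 -> nilpotent (f @*^-1 A).
Proof.
move=> nilA cKP; set P := (f @*^-1 A)%G.
have sKP : 'ker f \subset P := ker_sub_pre f A.
have sKZ : 'ker f \subset 'Z(P) by rewrite subsetI sKP; apply/commG1P.
have nsKP : 'ker f <| P := ker_normal_pre f A.
have nilPK : nilpotent (P / 'ker f).
  have kerPf : 'ker_P f = 'ker f by apply/setIidPr.
  have isoPK : P / 'ker f \isog f @* P by rewrite -kerPf first_isog_loc ?subsetIl.
  by rewrite (isog_nil isoPK) (nilpotentS _ nilA) // sub_morphim_pre ?subsetIl.
rewrite -quotient_center_nil -(isog_nil (third_isog sKZ nsKP (center_normal P))).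
exact: quotient_nil.
Qed.

Lemma prime_dvd_index_Phi (gT : finGroupType) (F W : {group gT}) p :
  nilpotent F -> W <| F -> W \subset 'Phi(F) -> prime p ->
  p %| #|F| -> p %| #|F : W|.
Proof.
move=> nilF nsWF sWPhi p_pr pF; apply/idPn=> p'FW.
have sOpW : 'O_p(F) \subset W.
  have nWOp := subset_trans (pcore_sub p F) (normal_norm nsWF).
  rewrite -quotient_sub1 // subG1 trivg_card1.
  rewrite (pnat_1 (quotient_pgroup _ (pcore_pgroup _ _))) //.
  apply: pnat_dvd (cardSg (quotientS W (pcore_sub p F))) _.
  by rewrite card_quotient ?normal_norm // p'natE.
have defF : 'Phi(F) <*> 'O_p^'(F) = F.
  apply/eqP; rewrite eqEsubset join_subG Phi_sub pcore_sub /=.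
  rewrite -{1}(dprodW (nilpotent_pcoreC p nilF)) mul_subG ?joing_subr //.
  exact: subset_trans sOpW (subset_trans sWPhi (joing_subl _ _)).
have p'F : p^'.-group F by rewrite -(Phi_nongen defF) genGid pcore_pgroup.
by move: p'F; rewrite /pgroup p'natE // pF.
Qed.

Lemma exponent_dvdn_prime_constt (gT : finGroupType) (A : {group gT}) m :
  (forall x p, x \in A -> prime p -> x.`_p ^+ p = 1) ->
  (forall p, prime p -> p %| #|A| -> p %| m) -> exponent A %| m.
Proof.
move=> expA primesA; apply/exponentP=> x Ax; apply/eqP; rewrite -order_dvdn.
apply/dvdn_partP=> [|p]; first exact: order_gt0.
rewrite mem_primes => /and3P[p_pr _ px]; rewrite -order_constt.
apply: dvdn_trans (primesA p p_pr (dvdn_trans px (order_dvdG Ax))).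
by rewrite order_dvdn expA.
Qed.

Section GeneratingTuples.

Variables (aT rT : finGroupType) (D : {group aT}) (f : {morphism D >-> rT}).

Lemma morphim_gen_tuple n (a : n.-tuple aT) (b : n.-tuple rT) :
  [set y in a] \subset D -> (forall i, f (tnth a i) = tnth b i) ->
  f @* <<[set y in a]>> = <<[set y in b]>>.
Proof.
move=> saD fab; rewrite morphim_gen //; congr <<_>>; apply/setP=> y.
apply/morphimP/idP=> [[x _] | ].
  by rewrite inE => /tnthP[i ->] ->; rewrite fab inE mem_tnth.
rewrite inE => /tnthP[i ->]; exists (tnth a i); rewrite ?fab //.
  by rewrite (subsetP saD) // inE mem_tnth.
by rewrite inE mem_tnth.
Qed.

Lemma eq_in_morph_gen (E : {group aT}) (g : {morphism E >-> rT}) (A : {set aT}) :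
  A \subset D :&: E -> {in A, f =1 g} -> {in <<A>>, f =1 g}.
Proof.
move=> sADE efg.
have eqG : group_set [set x in D :&: E | f x == g x].
  apply/group_setP; split=> [|x y]; first by rewrite !inE !group1 /= !morph1.
  rewrite !inE => /andP[/andP[Dx Ex] /eqP fgx] /andP[/andP[Dy Ey] /eqP fgy].
  by rewrite !groupM //= !morphM // fgx fgy.
have sAeq : <<A>> \subset Group eqG.
  rewrite gen_subG; apply/subsetP=> x Ax.
  by rewrite inE (subsetP sADE) //= efg.
by move=> x /(subsetP sAeq); rewrite inE => /andP[_ /eqP].
Qed.

Lemma Phi_ker_morphim_gen (A : {set aT}) :
  'ker f \subset 'Phi(D) -> A \subset D -> f @* <<A>> = f @* D -> <<A>> = D.
Proof.
move=> sKPhi sAD fAD; apply: Phi_nongen; apply/eqP.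
rewrite eqEsubset join_subG Phi_sub sAD /=.
rewrite -{1}(morphimGK (normal_sub (ker_normal f)) (subxx D)) -fAD.
rewrite morphimK ?gen_subG //.
by rewrite mul_subG ?gen_subG ?joing_subr // (subset_trans sKPhi) ?joing_subl.
Qed.

Lemma lift_gen_tuple n (b : n.-tuple rT) :
  'ker f \subset 'Phi(D) -> f @* D = <<[set y in b]>> ->
  exists2 a : n.-tuple aT,
    D :=: <<[set y in a]>> & forall i, f (tnth a i) = tnth b i.
Proof.
move=> sKPhi fD.
have liftb i : exists x, x \in D /\ f x = tnth b i.
  have : tnth b i \in f @* D by rewrite fD mem_gen // inE mem_tnth.
  by case/morphimP=> x _ Dx ->; exists x.
have [a0 a0P] := fin_all_exists liftb; set a := [tuple a0 i | i < n].
have faE i : f (tnth a i) = tnth b i by rewrite tnth_mktuple; case: (a0P i).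
have saD : [set y in a] \subset D.
  apply/subsetP=> y; rewrite inE => /tnthP[i ->].
  by rewrite tnth_mktuple; case: (a0P i).
exists a => //; apply/esym/Phi_ker_morphim_gen => //.
by rewrite (morphim_gen_tuple saD faE) fD.
Qed.

End GeneratingTuples.

Lemma quotient_isog_morphism (gT hT : finGroupType)
    (H N : {group hT}) (G : {group gT}) :
  N <| H -> H / N \isog G ->
  exists2 q : {morphism H >-> gT}, 'ker q = N & q @* H = G.
Proof.
move=> nsNH /isogP[f injf fHN]; have [sNH nNH] := andP nsNH.
have sHpre : H \subset coset N @*^-1 (H / N) by rewrite -sub_morphim_pre.
exists (restrm_morphism sHpre (f \o coset N)).
  rewrite ker_restrm ker_comp (trivgP injf) -kerE ker_coset; exact/setIidPr.
by rewrite morphim_restrm setIid morphim_comp.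
Qed.

Section Descendant.

Variables (gT hT : finGroupType) (G : {group gT}) (H : {group hT}) (c : nat).
Variable q : {morphism H >-> gT}.
Hypotheses (c_gt0 : 0 < c) (nu_c1 : Fseries H c.+1 = 1%G).
Hypotheses (kerq : 'ker q = Fseries H c) (qH : q @* H = G).

Lemma descendant_ker_sub_Phi : 'ker q \subset 'Phi(H).
Proof.
by rewrite kerq (subset_trans (Fseries_sub_leq H c_gt0)) ?Fseries1_sub_Phi.
Qed.

Lemma descendant_morphim_Fitting : q @* 'F(H) = 'F(G).
Proof. by rewrite morphim_Fitting_Phi_ker ?qH // descendant_ker_sub_Phi. Qed.

Lemma descendant_Frank : Frank G = #|'F(H) : Fseries H 1|.
Proof.
have mF := descendant_morphim_Fitting.
rewrite -(index_morphim_ker q (Fseries_sub_Fitting H 1) (Fitting_sub H)).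
rewrite (morphim_Fseries mF 1) mF kerq (setIidPr (Fseries_sub_Fitting H c)).
have /eqP-> : #|Fseries H c : Fseries H 1| == 1%N.
  by rewrite indexg_eq1 Fseries_sub_leq.
by rewrite muln1.
Qed.

Lemma descendant_exponent : exponent (Fseries H c) %| Fk G.
Proof.
apply: exponent_dvdn_prime_constt => [x p Nx p_pr | p p_pr pN].
  by have [_ _ _ /(_ x p Nx p_pr)] := Fseries_factor H c; rewrite nu_c1 => /set1P.
have pF : p %| #|'F(H) : Fseries H 1|.
  apply: prime_dvd_index_Phi (Fitting_nil H) _ _ p_pr _.
  - exact: Fseries_normal_Fitting.
  - exact: Fseries1_sub_Phi_Fitting.
  - exact: dvdn_trans pN (cardSg (Fseries_sub_Fitting H c)).
rewrite /Fk (big_rem p) ?dvdn_mulr //= mem_primes p_pr descendant_Frank pF.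
by rewrite indexg_gt0.
Qed.

Lemma descendant_cover_cond n (g : n.-tuple gT) (h : n.-tuple hT) :
  H :=: <<[set y in h]>> -> (forall i, q (tnth h i) = tnth g i) ->
  cover_cond G g h q.
Proof.
move=> genH qh; split=> //; rewrite kerq ?descendant_exponent //.
apply/trivgP; have [_ _ cNF _] := Fseries_factor H c; rewrite nu_c1 in cNF.
apply: subset_trans cNF; rewrite commgS // -qH.
exact: morphpre_Fitting_sub descendant_ker_sub_Phi.
Qed.

End Descendant.

Section CoveringLift.

Variables (gT sT hT : finGroupType).
Variables (G : {group gT}) (Gs : {group sT}) (H : {group hT}).
Variables (n : nat) (g : n.-tuple gT) (gs : n.-tuple sT) (h : n.-tuple hT).
Variables (pi : {morphism Gs >-> gT}) (q : {morphism H >-> gT}).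
Variable phi : {morphism Gs >-> hT}.
Hypotheses (genG : G :=: <<[set y in g]>>) (genGs : Gs :=: <<[set y in gs]>>).
Hypotheses (genH : H :=: <<[set y in h]>>).
Hypotheses (pi_gs : forall i, pi (tnth gs i) = tnth g i).
Hypotheses (q_h : forall i, q (tnth h i) = tnth g i).
Hypotheses (phi_gs : forall i, phi (tnth gs i) = tnth h i).

Let sgsGs : [set y in gs] \subset Gs.
Proof. by rewrite genGs subset_gen. Qed.

Lemma morphim_lift : phi @* Gs = H.
Proof. by rewrite genH -(morphim_gen_tuple sgsGs phi_gs) -genGs. Qed.

Lemma morphim_cover : pi @* Gs = G.
Proof. by rewrite genG -(morphim_gen_tuple sgsGs pi_gs) -genGs. Qed.

Lemma cover_factors_lift : {in Gs, pi =1 q \o phi}.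
Proof.
have sgs : [set y in gs] \subset Gs :&: phi @*^-1 H.
  rewrite subsetI sgsGs -sub_morphim_pre //.
  by rewrite (subset_trans (morphimS phi sgsGs)) ?morphim_lift.
move=> x; rewrite [in x \in _]genGs.
apply: (eq_in_morph_gen (g := [morphism of q \o phi]) sgs).
by move=> y; rewrite inE => /tnthP[i ->]; rewrite /= pi_gs phi_gs q_h.
Qed.

Lemma morphpre_cover B : pi @*^-1 B = phi @*^-1 (q @*^-1 B).
Proof.
apply/setP=> x; rewrite !inE; have [Gsx | //] := boolP (x \in Gs).
have Hphix : phi x \in H by rewrite -morphim_lift mem_morphim.
by rewrite cover_factors_lift // Hphix.
Qed.

Hypotheses (qF : q @* 'F(H) = 'F(G)) (cKF : [~: 'ker pi, pi @*^-1 'F(G)] = 1).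

Lemma morphim_lift_Fitting : phi @* 'F(Gs) = 'F(H).
Proof.
apply/eqP; rewrite eqEsubset -{1}morphim_lift morphim_Fitting /=.
have sFq : 'F(H) \subset q @*^-1 'F(G).
  by rewrite -sub_morphim_pre ?Fitting_sub ?qF.
have sqF : q @*^-1 'F(G) \subset phi @* Gs by rewrite morphim_lift subsetIl.
rewrite (subset_trans sFq) // -(morphpreK sqF) morphimS // -morphpre_cover.
apply: Fitting_max; last exact: nilpotent_morphpre_central (Fitting_nil G) cKF.
rewrite -[X in _ <| X](morphimGK (normal_sub (ker_normal pi)) (subxx Gs)).
by rewrite morphpre_normal ?morphim_cover ?Fitting_normal ?Fitting_sub.
Qed.

Lemma ker_lift_allowable c :
  'ker q = Fseries H c -> Fseries H c != 1%G -> allowable pi c ('ker phi)%G.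
Proof.
move=> kerq ntN; have sNH : Fseries H c \subset phi @* Gs.
  by rewrite morphim_lift Fseries_sub.
have kerpi : 'ker pi = phi @*^-1 Fseries H c.
  by rewrite kerE morphpre_cover -kerE kerq.
split; last 1 first.
- rewrite kerpi -(morphim_Fseries morphim_lift_Fitting) morphimK ?Fseries_sub //.
  apply/esym/normC; apply: subset_trans (Fseries_sub Gs c) _.
  exact: normal_norm (ker_normal phi).
- rewrite kerpi properEneq ker_sub_pre andbT; apply: contraNneq ntN => eqKN.
  by rewrite -val_eqE /= -(morphpreK sNH) -eqKN morphim_ker.
exact: ker_normal.
Qed.

End CoveringLift.

Theorem theorem4p6 (gT sT : finGroupType) (G : {group gT}) (c n : nat)
    (g : n.-tuple gT) (Gs : {group sT}) (gs : n.-tuple sT)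
    (pi : {morphism Gs >-> gT}) :
  0 < c ->
  Fclass G c ->
  G :=: <<[set y in g]>> ->
  is_covering_group G g gs pi ->
  forall (hT : finGroupType) (H : {group hT}),
    descendant G c H ->
    exists U : {group sT}, allowable pi c U /\ H \isog Gs / U.
Proof.
move=> c_gt0 _ genG [[genGs pi_gs cKF _] univ] hT H [[nu_c1 ntH] isoHG].
have ntN := ntH c (ltnSn c).
have [q kerq qH] := quotient_isog_morphism (Fseries_normal H c) isoHG.
have sKPhi := descendant_ker_sub_Phi c_gt0 kerq.
have [h genH q_h] := lift_gen_tuple sKPhi (etrans qH genG).
have ccH := descendant_cover_cond c_gt0 nu_c1 kerq qH genH q_h.
have [phi phi_gs] := univ hT H h q ccH.
have qF := descendant_morphim_Fitting c_gt0 kerq qH.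
exists ('ker phi)%G; split.
  exact: ker_lift_allowable genG genGs genH pi_gs q_h phi_gs qF cKF c kerq ntN.
by rewrite isog_sym -(morphim_lift genGs genH phi_gs) first_isog.
Qed.
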